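(* Backward proof search in $\mathsf{G}(\mathbf{K}_D)$ and in $\mathsf{G}(\mathbf{KD}_D)$ always terminates: for each of these two calculi, there is no infinite sequence of sequents $S_0,S_1,S_2,\dots$ such that, for every $i$, $S_{i+1}$ is a premise of some instance of a rule of the calculus whose conclusion is $S_i$.
   Context: Language: fix a finite nonempty set $\mathsf{Agt}$ of agents and a countable set $\mathsf{Prop}$ of propositional variables; $\mathsf{Grp}$ is the set of nonempty subsets of $\mathsf{Agt}$. Formulas: $\alpha::=p\mid\bot\mid\alpha\wedge\alpha\mid\alpha\vee\alpha\mid\alpha\rightarrow\alpha\mid\neg\alpha\mid D_G\alpha$ ($p\in\mathsf{Prop}$, $G\in\mathsf{Grp}$). Outmost-boxed formula: one of the form $D_G\gamma$. Sequent calculi (sequents $\Gamma\Rightarrow\Delta$ are pairs of finite multisets): $\mathsf{G}(\mathbf{K}_D)$ has initial sequents $\Gamma,p\Rightarrow p,\Delta$ and $\bot,\Gamma\Rightarrow\Delta$; rules $(R\wedge)$ from $\Gamma\Rightarrow\Delta,\alpha_1$ and $\Gamma\Rightarrow\Delta,\alpha_2$ infer $\Gamma\Rightarrow\Delta,\alpha_1\wedge\alpha_2$; $(L\wedge)$ from $\alpha_1,\alpha_2,\Gamma\Rightarrow\Delta$ infer $\alpha_1\wedge\alpha_2,\Gamma\Rightarrow\Delta$; $(R\vee)$ from $\Gamma\Rightarrow\Delta,\alpha_1,\alpha_2$ infer $\Gamma\Rightarrow\Delta,\alpha_1\vee\alpha_2$; $(L\vee)$ from $\alpha_1,\Gamma\Rightarrow\Delta$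 and $\alpha_2,\Gamma\Rightarrow\Delta$ infer $\alpha_1\vee\alpha_2,\Gamma\Rightarrow\Delta$; $(R\rightarrow)$ from $\alpha_1,\Gamma\Rightarrow\Delta,\alpha_2$ infer $\Gamma\Rightarrow\Delta,\alpha_1\rightarrow\alpha_2$; $(L\rightarrow)$ from $\Gamma\Rightarrow\Delta,\alpha_1$ and $\alpha_2,\Gamma\Rightarrow\Delta$ infer $\alpha_1\rightarrow\alpha_2,\Gamma\Rightarrow\Delta$; $(R\neg)$ from $\alpha,\Gamma\Rightarrow\Delta$ infer $\Gamma\Rightarrow\Delta,\neg\alpha$; $(L\neg)$ from $\Gamma\Rightarrow\Delta,\alpha$ infer $\neg\alpha,\Gamma\Rightarrow\Delta$; $(D_K)$: from $\alpha_1,\dots,\alpha_n\Rightarrow\beta$ ($n\ge0$) infer $\Sigma,D_{G_1}\alpha_1,\dots,D_{G_n}\alpha_n\Rightarrow D_G\beta,\Omega$ where all $G_i\subseteq G$, $\Sigma$ consists only of propositional variables, $\bot$, and $D_H\gamma$ with $H\not\subseteq G$, and $\Omega$ only of propositional variables, $\bot$, outmost-boxed formulas. $\mathsf{G}(\mathbf{KD}_D)$ adds $(D_D)$: from $\Gamma\Rightarrow$ with $\Gamma\neq\emptyset$ infer $\Sigma,D_{\{a\}}\Gamma\Rightarrow\Omega$ ($a\in\mathsf{Agt}$, $D_{\{a\}}\Gamma=\{D_{\{a\}}\gamma:\gamma\in\Gamma\}$), $\Sigma$ only propositional variables, $\bot$, $D_H\gamma$ with $H\neq\{a\}$; $\Omega$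 only propositional variables, $\bot$, outmost-boxed formulas. *)

From mathcomp Require Import all_boot.
From Stdlib Require Import Permutation.
Set Implicit Arguments.
Unset Strict Implicit.
Unset Printing Implicit Defensive.

Section Logic.
Variables (Agt : finType) (PropV : Type).

Definition grp := {G : {set Agt} | G != set0}.

Inductive form : Type :=
| Var of PropV
| Bot
| And of form & form
| Or of form & form
| Imp of form & form
| Neg of form
| Box of grp & form.

(* sequents: pairs of finite multisets, represented by lists up to permutation *)
Definition sequent := (seq form * seq form)%type.

Definition seq_equiv (S T : sequent) : Prop :=
  Permutation S.1 T.1 /\ Permutation S.2 T.2.

Definition sigmaK (G : grp) (f : form) : bool :=
  match f with
  | Var _ | Bot => true
  | Box H _ => ~~ (sval H \subset sval G)
  | _ => false
  end.

Definition sigmaD (a : Agt) (f : form) : bool :=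
  match f with
  | Var _ | Bot => true
  | Box H _ => sval H != [set a]
  | _ => false
  end.

Definition omegaC (f : form) : bool :=
  match f with
  | Var _ | Bot | Box _ _ => true
  | _ => false
  end.

Inductive ruleK : seq sequent -> sequent -> Prop :=
| r_init_var p Γ Δ : ruleK [::] (Var p :: Γ, Var p :: Δ)
| r_init_bot Γ Δ : ruleK [::] (Bot :: Γ, Δ)
| r_Rand a1 a2 Γ Δ :
    ruleK [:: (Γ, Δ ++ [:: a1]); (Γ, Δ ++ [:: a2])] (Γ, Δ ++ [:: And a1 a2])
| r_Land a1 a2 Γ Δ : ruleK [:: (a1 :: a2 :: Γ, Δ)] (And a1 a2 :: Γ, Δ)
| r_Ror a1 a2 Γ Δ : ruleK [:: (Γ, Δ ++ [:: a1; a2])] (Γ, Δ ++ [:: Or a1 a2])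
| r_Lor a1 a2 Γ Δ :
    ruleK [:: (a1 :: Γ, Δ); (a2 :: Γ, Δ)] (Or a1 a2 :: Γ, Δ)
| r_Rimp a1 a2 Γ Δ : ruleK [:: (a1 :: Γ, Δ ++ [:: a2])] (Γ, Δ ++ [:: Imp a1 a2])
| r_Limp a1 a2 Γ Δ :
    ruleK [:: (Γ, Δ ++ [:: a1]); (a2 :: Γ, Δ)] (Imp a1 a2 :: Γ, Δ)
| r_Rneg a Γ Δ : ruleK [:: (a :: Γ, Δ)] (Γ, Δ ++ [:: Neg a])
| r_Lneg a Γ Δ : ruleK [:: (Γ, Δ ++ [:: a])] (Neg a :: Γ, Δ)
| r_DK (boxed : seq (grp * form)) (G : grp) (beta : form) (Σ Ω : seq form) :
    all (fun p : grp * form => sval p.1 \subset sval G) boxed ->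
    all (sigmaK G) Σ -> all omegaC Ω ->
    ruleK [:: (map snd boxed, [:: beta])]
          (Σ ++ map (fun p : grp * form => Box p.1 p.2) boxed, Box G beta :: Ω).

Inductive ruleKD : seq sequent -> sequent -> Prop :=
| r_K prems C : ruleK prems C -> ruleKD prems C
| r_DD (a : Agt) (Ga : grp) (Γ Σ Ω : seq form) :
    sval Ga = [set a] -> Γ <> [::] ->
    all (sigmaD a) Σ -> all omegaC Ω ->
    ruleKD [:: (Γ, [::])] (Σ ++ map (Box Ga) Γ, Ω).

Definition premise_of (rule : seq sequent -> sequent -> Prop)
  (S' S : sequent) : Prop :=
  exists (prems : seq sequent) (C P : sequent),
    rule prems C /\ seq_equiv C S /\ List.In P prems /\ seq_equiv P S'.

Definition terminates (rule : seq sequent -> sequent -> Prop) : Prop :=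
  ~ exists S : nat -> sequent, forall i, premise_of rule (S i.+1) (S i).

End Logic.

From mathcomp Require Import all_boot zify.
From Stdlib Require Import Permutation Lia.

(* Every rule of both calculi is size-reducing: the premises of an instance
   are strictly smaller, in total formula size, than its conclusion. For
   (D_K) the boxes [D_Gi] disappear and the right-hand [D_G beta] shrinks
   to [beta]; for (D_D) the list [Γ] is nonempty, so at least one box is
   lost. Since the size is a multiset invariant, a backward search defines a
   strictly decreasing sequence of natural numbers, which cannot be infinite. *)

Lemma sumn_Permutation (s t : seq nat) : Permutation s t -> sumn s = sumn t.
Proof. by elim=> //= [x s1 s2 _ -> | x y s1 | s1 s2 s3 _ -> _ ->]; rewrite // addnCA. Qed.

Lemma no_decreasing_nat_chain (f : nat -> nat) : ~ (forall i, f i.+1 < f i).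
Proof.
move=> f_decr.
have f_bound n : f n + n <= f 0.
  by elim: n => [|n IH]; [rewrite addn0 | have := f_decr n; lia].
by have := f_bound (f 0).+1; lia.
Qed.

Section SequentSize.
Variables (Agt : finType) (PropV : Type).
Local Notation form := (form Agt PropV).
Local Notation sequent := (sequent Agt PropV).

Fixpoint form_size (f : form) : nat :=
  match f with
  | Var _ | Bot => 1
  | And a b | Or a b | Imp a b => (form_size a + form_size b).+1
  | Neg a | Box _ a => (form_size a).+1
  end.

Definition forms_size (l : seq form) : nat := sumn (map form_size l).

Definition sequent_size (S : sequent) : nat :=
  forms_size S.1 + forms_size S.2.

Lemma forms_size_cat l1 l2 : forms_size (l1 ++ l2) = forms_size l1 + forms_size l2.
Proof. by rewrite /forms_size map_cat sumn_cat. Qed.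

Lemma forms_size_map_Box {T : Type} (g : T -> grp Agt) (h : T -> form) s :
  forms_size (map (fun x => Box (g x) (h x)) s) = forms_size (map h s) + size s.
Proof. by elim: s => //= x s; rewrite /forms_size /= => ->; lia. Qed.

Lemma forms_size_Permutation l1 l2 :
  Permutation l1 l2 -> forms_size l1 = forms_size l2.
Proof. by move=> l12; apply/sumn_Permutation/Permutation_map. Qed.

Lemma sequent_size_equiv S T : seq_equiv S T -> sequent_size S = sequent_size T.
Proof.
case=> [/forms_size_Permutation E1 /forms_size_Permutation E2].
by rewrite /sequent_size E1 E2.
Qed.

Definition size_reducing (rule : seq sequent -> sequent -> Prop) : Prop :=
  forall prems C P, rule prems C -> List.In P prems -> sequent_size P < sequent_size C.

Lemma terminates_size_reducing rule : size_reducing rule -> terminates rule.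
Proof.
move=> reducing [S premS].
apply: (@no_decreasing_nat_chain (fun i => sequent_size (S i))) => i.
have [prems [C [P [ruleC [equivC [inP equivP]]]]]] := premS i.
rewrite -(sequent_size_equiv _ _ equivC) -(sequent_size_equiv _ _ equivP).
exact: reducing ruleC inP.
Qed.

Lemma ruleK_size_reducing : size_reducing (@ruleK Agt PropV).
Proof.
move=> prems C P [p Γ Δ|Γ Δ|a1 a2 Γ Δ|a1 a2 Γ Δ|a1 a2 Γ Δ|a1 a2 Γ Δ|a1 a2 Γ Δ
                  |a1 a2 Γ Δ|a Γ Δ|a Γ Δ|ps G b Σ Ω _ _ _] //= inP.
all: repeat case: inP => [<-|inP] //.
all: rewrite /sequent_size /= ?forms_size_cat ?forms_size_map_Box /forms_size /=; lia.
Qed.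

Lemma ruleKD_size_reducing : size_reducing (@ruleKD Agt PropV).
Proof.
move=> prems C P [{}prems {}C ruleC|a Ga Γ Σ Ω _ Γ_nonempty _ _].
  exact: ruleK_size_reducing ruleC.
have size_pos : 0 < size Γ by case: Γ Γ_nonempty.
case=> // <-; rewrite /sequent_size forms_size_cat.
by rewrite (forms_size_map_Box (fun=> Ga) id) map_id /forms_size /=; lia.
Qed.

End SequentSize.

Theorem proposition3p5 (Agt : finType) (PropV : countType) :
  0 < #|Agt| ->
  terminates (@ruleK Agt PropV) /\ terminates (@ruleKD Agt PropV).
Proof.
move=> _; split; apply: terminates_size_reducing.
- exact: ruleK_size_reducing.
- exact: ruleKD_size_reducing.
Qed.
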